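(* Let $\mathcal I$ be a co-analytic ideal on $\omega$ and $F:\omega^\omega\to\mathcal I^+$ a continuous surjection. Then the games $\mathcal H_{\mathsf{Cat}}(\mathcal I,F)$ and $\mathcal G_{\mathsf{Cat}}(\mathcal I)$ are determined.
   Context: $\mathcal P(\omega)$ is identified with $2^\omega$; $\mathcal I$ is co-analytic as a subset of it, and $\mathcal I^+=\mathcal P(\omega)\setminus\mathcal I$. The game $\mathcal G_{\mathsf{Cat}}(\mathcal I)$: in round $n\in\omega$ Player I plays $A_n\in\mathcal I$ and Player II plays $b_n\in\omega\setminus A_n$; II wins iff $\{b_n:n\in\omega\}\in\mathcal I^+$. Let $R$ be the set of functions $f:\omega\to\omega\cup\{-1\}$ with $f(n)<n$ for all $n$ and $\{n:f(n)\ne-1\}$ infinite; for $f\in R$, enumerating $\{n:f(n)\ne-1\}=\{n_i:i\in\omega\}$ increasingly, let $\tilde f(i)=f(n_i)$. The game $\mathcal H_{\mathsf{Cat}}(\mathcal I,F)$: in round $n$ Player I plays $A_n\in\mathcal I$ and Player II plays a pair $(b_n,m_n)$ with $b_n\in\omega\setminus A_n$ and $m_n\in n\cup\{-1\}$; letting $g(n)=m_n$, Player II wins iff $\{n:m_n\ne-1\}$ is infinite and $F(\tilde g)=\{b_n:n\in\omega\}$. A game is determined if one of the players has a winning strategy. *)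

From Stdlib Require Import Arith List ClassicalEpsilon.
Import ListNotations.

(** A subset of omega, i.e. a point of the Cantor space 2^omega. *)
Definition pset := nat -> bool.

(** Continuity of maps between sequence spaces A^omega -> B^omega
    (product topology of discrete spaces): every finite part of the
    output is determined by a finite part of the input. *)
Definition seq_continuous {A B : Type} (f : (nat -> A) -> (nat -> B)) : Prop :=
  forall (x : nat -> A) (n : nat), exists m : nat,
    forall y : nat -> A, (forall i, i < m -> x i = y i) ->
      forall j, j < n -> f x j = f y j.

Definition analytic (S : pset -> Prop) : Prop :=
  (forall y, ~ S y) \/
  exists f : (nat -> nat) -> pset, seq_continuous f /\
    forall y : pset, S y <-> exists x, forall k, f x k = y k.

Definition coanalytic (I : pset -> Prop) : Prop := analytic (fun y => ~ I y).

Definition finite_pset (A : pset) : Prop :=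
  exists N, forall k, A k = true -> k < N.

Record is_ideal (I : pset -> Prop) : Prop := {
  ideal_down : forall A B : pset, I B -> (forall k, A k = true -> B k = true) -> I A;
  ideal_union : forall A B : pset, I A -> I B -> I (fun k => orb (A k) (B k));
  ideal_fin : forall A : pset, finite_pset A -> I A;
  ideal_proper : ~ I (fun _ => true)
}.

Definition positive (I : pset -> Prop) (A : pset) : Prop := ~ I A.

Definition set_of_seq (b : nat -> nat) : pset :=
  fun k => if excluded_middle_informative (exists n, b n = k) then true else false.

Definition prefix {A : Type} (s : nat -> A) (n : nat) : list A := map s (seq 0 n).

(* Player I plays A_n in I, Player II plays b_n in omega \ A_n;
   II wins iff {b_n : n} in I^+.
   A strategy for I maps II's previous moves (b_0..b_{n-1}) to A_n;
   a strategy for II maps I's moves (A_0..A_n) to b_n.  A player who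
   makes an illegal move loses. *)

Definition G_winning_I (I : pset -> Prop) (tau : list nat -> pset) : Prop :=
  forall b : nat -> nat,
    (forall n, I (tau (prefix b n))) /\
    ((forall n, tau (prefix b n) (b n) = false) -> I (set_of_seq b)).

Definition G_winning_II (I : pset -> Prop) (sigma : list pset -> nat) : Prop :=
  forall A : nat -> pset, (forall n, I (A n)) ->
    let b := fun n => sigma (prefix A (S n)) in
    (forall n, A n (b n) = false) /\ positive I (set_of_seq b).

Definition G_determined (I : pset -> Prop) : Prop :=
  (exists tau, G_winning_I I tau) \/ (exists sigma, G_winning_II I sigma).

(* The value -1 is encoded by [None]; m_n in n u {-1} means m_n = None or
   m_n = Some k with k < n. *)

Definition legal_m (n : nat) (m : option nat) : Prop :=
  match m with None => True | Some k => k < n end.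

Definition infinitely_defined (g : nat -> option nat) : Prop :=
  forall N, exists n, N <= n /\ g n <> None.

Definition enumerates_support (g : nat -> option nat) (e : nat -> nat) : Prop :=
  (forall i, e i < e (S i)) /\ (forall n, g n <> None <-> exists i, e i = n).

Definition tilde (g : nat -> option nat) (e : nat -> nat) : nat -> nat :=
  fun i => match g (e i) with Some k => k | None => 0 end.

Definition H_II_wins_play (F : (nat -> nat) -> pset) (p : nat -> nat * option nat) : Prop :=
  let g := fun n => snd (p n) in
  infinitely_defined g /\
  forall e, enumerates_support g e ->
    forall k, F (tilde g e) k = set_of_seq (fun n => fst (p n)) k.

Definition H_winning_I (I : pset -> Prop) (F : (nat -> nat) -> pset)
  (tau : list (nat * option nat) -> pset) : Prop :=
  forall p : nat -> nat * option nat,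
    (forall n, I (tau (prefix p n))) /\
    ((forall n, tau (prefix p n) (fst (p n)) = false /\ legal_m n (snd (p n))) ->
       ~ H_II_wins_play F p).

Definition H_winning_II (I : pset -> Prop) (F : (nat -> nat) -> pset)
  (sigma : list pset -> nat * option nat) : Prop :=
  forall A : nat -> pset, (forall n, I (A n)) ->
    let p := fun n => sigma (prefix A (S n)) in
    (forall n, A n (fst (p n)) = false /\ legal_m n (snd (p n))) /\
    H_II_wins_play F p.

Definition H_determined (I : pset -> Prop) (F : (nat -> nat) -> pset) : Prop :=
  (exists tau, H_winning_I I F tau) \/ (exists sigma, H_winning_II I F sigma).

(* For a play (b_n, m_n) of H_Cat(I,F), the condition "the m_n are defined
   infinitely often and F(g~) = {b_n : n}" splits into countably many
   requirements, and continuity of F makes each of them decided by a finite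
   part of the play.  Such a G_delta condition becomes a Buchi condition (a set
   of finite positions is visited infinitely often) by counting how many
   requirements have already been secured, and Buchi games are determined:
   either II has a set Z of positions from each of which she can force a visit
   followed by a return to Z, or I has a well-founded family of traps in which
   each visit costs him one level.
   For G_Cat(I), a strategy of II in H is played forgetting the m_n, and a
   strategy tau of I in H yields the strategy playing the finite union of the
   answers of tau to all legal m's; if II ever produced an I-positive set, the
   surjectivity of F would give m's defeating tau.  Co-analyticity of I is
   needed only for such an F to exist. *)

From Stdlib Require Import Bool Arith List Lia ClassicalEpsilon Classical FunctionalExtensionality.
Import ListNotations.

Lemma prefix_S {A} (s : nat -> A) n : prefix s (S n) = prefix s n ++ [s n].
Proof. unfold prefix. rewrite seq_S, map_app. reflexivity. Qed.

Lemma prefix_length {A} (s : nat -> A) n : length (prefix s n) = n.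
Proof. unfold prefix. rewrite length_map, length_seq. reflexivity. Qed.

Lemma prefix_map {A B} (f : A -> B) (s : nat -> A) n :
  map f (prefix s n) = prefix (fun i => f (s i)) n.
Proof. unfold prefix. apply map_map. Qed.

Lemma prefix_eq_iff {A} (a b : nat -> A) n :
  prefix a n = prefix b n <-> forall i, i < n -> a i = b i.
Proof.
  split.
  - induction n as [|n IH]; intros Hab i Hi; [lia|].
    rewrite !prefix_S in Hab. apply app_inj_tail in Hab as [Hab Hn].
    destruct (Nat.eq_dec i n) as [->|]; [exact Hn|]. apply IH; [exact Hab|lia].
  - intros Hab. apply map_ext_in. intros i Hi%in_seq. apply Hab. lia.
Qed.

Lemma prefix_le {A} (a b : nat -> A) m n :
  m <= n -> prefix a n = prefix b n -> prefix a m = prefix b m.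
Proof. rewrite !prefix_eq_iff. intros Hmn Hab i Hi. apply Hab. lia. Qed.

Lemma prefix_nth {A} (l : list A) d : prefix (fun i => nth i l d) (length l) = l.
Proof.
  apply (nth_ext _ _ d d); rewrite prefix_length; [reflexivity|].
  intros n Hn. unfold prefix.
  rewrite nth_indep with (d' := (fun i => nth i l d) 0) by (rewrite length_map, length_seq; lia).
  rewrite (map_nth (fun i => nth i l d)), seq_nth by lia. reflexivity.
Qed.

Lemma combine_prefix {A B} (a : nat -> A) (b : nat -> B) n :
  combine (prefix a n) (prefix b n) = prefix (fun i => (a i, b i)) n.
Proof. unfold prefix. induction (seq 0 n); simpl; congruence. Qed.

Lemma classic_least (P : nat -> Prop) :
  (exists n, P n) -> exists n, P n /\ forall m, P m -> n <= m.
Proof.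
  intros HP.
  destruct (dec_inh_nat_subset_has_unique_least_element P (fun n => classic (P n)) HP)
    as [n [[Pn Hn] _]].
  eauto.
Qed.

Definition pick {A : Type} (H : inhabited A) : A := epsilon H (fun _ => True).

Section ForcedRequirements.
Variable Y : Type.
Variable P : nat -> (nat -> Y) -> Prop.

Definition forces (s : list Y) (j : nat) : Prop :=
  forall q, prefix q (length s) = s -> P j q.

Definition forces_upto (s : list Y) (k : nat) : Prop :=
  forall j, j <= k -> forces s j.

(* [level s] is the number of proper prefixes of [s] satisfying [progress]:
   each of them secures one more requirement.  It is computed on the reversed
   list so that the recursion peels off the last move. *)
Fixpoint level_rev (r : list Y) : nat :=
  match r with
  | [] => 0
  | _ :: r' => level_rev r' +
      (if excluded_middle_informative (forces_upto (rev r') (level_rev r')) then 1 else 0)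
  end.

Definition level (s : list Y) : nat := level_rev (rev s).

Definition progress (s : list Y) : Prop := forces_upto s (level s).

Lemma level_prefix_S q n :
  level (prefix q (S n)) = level (prefix q n) +
    (if excluded_middle_informative (progress (prefix q n)) then 1 else 0).
Proof.
  unfold level, progress. rewrite prefix_S, rev_unit. cbn [level_rev].
  rewrite rev_involutive. reflexivity.
Qed.

Lemma level_prefix_mono q m n : m <= n -> level (prefix q m) <= level (prefix q n).
Proof. induction 1; [lia|]. rewrite level_prefix_S. lia. Qed.

Lemma forces_prefix q n j :
  forces (prefix q n) j <-> forall q', prefix q' n = prefix q n -> P j q'.
Proof. unfold forces. rewrite prefix_length. reflexivity. Qed.

Lemma forces_prefix_mono q m n j :
  m <= n -> forces (prefix q m) j -> forces (prefix q n) j.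
Proof.
  rewrite !forces_prefix. intros Hmn Hm q' Hq'. apply Hm. exact (prefix_le _ _ _ _ Hmn Hq').
Qed.

Lemma forces_upto_eventually q :
  (forall j, exists n, forces (prefix q n) j) ->
  forall k, exists n, forces_upto (prefix q n) k.
Proof.
  intros Hq k. induction k as [|k [n Hn]].
  - destruct (Hq 0) as [n Hn]. exists n. intros j Hj. replace j with 0 by lia. exact Hn.
  - destruct (Hq (S k)) as [m Hm]. exists (n + m). intros j Hj.
    destruct (Nat.eq_dec j (S k)) as [->|].
    + apply (forces_prefix_mono q m); [lia|exact Hm].
    + apply (forces_prefix_mono q n); [lia|]. apply Hn. lia.
Qed.

Theorem forces_iff_progress q :
  (forall j, exists n, forces (prefix q n) j) <->
  (forall N, exists n, N <= n /\ progress (prefix q n)).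
Proof.
  split.
  - intros Hq N. apply NNPP. intros Hno.
    assert (Hflat : forall i, level (prefix q (N + i)) = level (prefix q N)).
    { induction i as [|i IH]; [now rewrite Nat.add_0_r|].
      rewrite Nat.add_succ_r, level_prefix_S, IH.
      destruct (excluded_middle_informative _) as [Hp|]; [|lia].
      exfalso. apply Hno. exists (N + i). split; [lia|exact Hp]. }
    destruct (forces_upto_eventually q Hq (level (prefix q N))) as [M HM].
    apply Hno. exists (N + M). split; [lia|].
    unfold progress. rewrite Hflat. intros j Hj.
    apply (forces_prefix_mono q M); [lia|]. exact (HM j Hj).
  - intros Hinf.
    assert (Hunb : forall k, exists n, k <= level (prefix q n)).
    { induction k as [|k [n Hn]]; [exists 0; lia|].
      destruct (Hinf n) as [m [Hm Hp]]. exists (S m).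
      rewrite level_prefix_S. destruct (excluded_middle_informative _); [|contradiction].
      pose proof (level_prefix_mono q n m Hm). lia. }
    intros j. destruct (Hunb j) as [n Hn]. destruct (Hinf n) as [m [Hm Hp]].
    exists m. apply Hp. pose proof (level_prefix_mono q n m Hm). lia.
Qed.

End ForcedRequirements.

Section BuchiGame.
Variables X Y : Type.
Variable LX : X -> Prop.
Variable LY : list (X * Y) -> X -> Y -> Prop.
Variable D : list (X * Y) -> Prop.

Local Notation hist := (list (X * Y)).

Definition extend (h : hist) (a : X) (y : Y) : hist := h ++ [(a, y)].

Definition play_I (tau : list Y -> X) (p : nat -> Y) (n : nat) : hist :=
  prefix (fun i => (tau (prefix p i), p i)) n.

Definition play_II (sigma : list X -> Y) (A : nat -> X) (n : nat) : hist :=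
  prefix (fun i => (A i, sigma (prefix A (S i)))) n.

Definition buchi_winning_I (tau : list Y -> X) : Prop :=
  (forall l, LX (tau l)) /\
  forall p, (forall n, LY (play_I tau p n) (tau (prefix p n)) (p n)) ->
    exists N, forall n, N <= n -> ~ D (play_I tau p n).

Definition buchi_winning_II (sigma : list X -> Y) : Prop :=
  forall A, (forall n, LX (A n)) ->
    (forall n, LY (play_II sigma A n) (A n) (sigma (prefix A (S n)))) /\
    forall N, exists n, N <= n /\ D (play_II sigma A n).

(* From [h], II can force a visit to [D] after which the play is back in [Z]. *)
Inductive attractor (Z : hist -> Prop) : hist -> Type :=
| attr_visit h : D h ->
    (forall a, LX a -> exists y, LY h a y /\ Z (extend h a y)) -> attractor Z h
| attr_step h (next : forall a, LX a -> Y) :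
    (forall a la, LY h a (next a la)) ->
    (forall a la, attractor Z (extend h a (next a la))) -> attractor Z h.

(* I keeps the play in [trap_set] until it visits [D]; from there he reaches a
   new trap, one level lower in this well-founded type. *)
Inductive trap (h : hist) : Type := {
  trap_set : hist -> Prop;
  trap_root : trap_set h;
  trap_move : forall h', trap_set h' -> X;
  trap_move_legal : forall h' H, LX (trap_move h' H);
  trap_stay : forall h' H y, LY h' (trap_move h' H) y -> ~ D h' ->
    trap_set (extend h' (trap_move h' H) y);
  trap_next : forall h' H y, LY h' (trap_move h' H) y -> D h' ->
    trap (extend h' (trap_move h' H) y) }.

Lemma escape_attractor Z h : ~ inhabited (attractor Z h) ->
  exists a, LX a /\ forall y, LY h a y ->
    (D h -> ~ Z (extend h a y)) /\ (~ D h -> ~ inhabited (attractor Z (extend h a y))).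
Proof.
  intros Hh. apply NNPP. intros Hno. apply Hh.
  destruct (classic (D h)) as [Dh|nDh].
  - constructor. apply attr_visit; [exact Dh|]. intros a la.
    apply NNPP. intros Ha. apply Hno. exists a. split; [exact la|].
    intros y ly. split; [|contradiction]. intros _ Zy. apply Ha. eauto.
  - assert (Hnext : forall a, LX a ->
      exists y, LY h a y /\ inhabited (attractor Z (extend h a y))).
    { intros a la. apply NNPP. intros Ha. apply Hno. exists a. split; [exact la|].
      intros y ly. split; [contradiction|]. intros _ Hy. apply Ha. eauto. }
    pose (c a la := constructive_indefinite_description _ (Hnext a la)).
    constructor. apply (attr_step _ h (fun a la => proj1_sig (c a la))).
    + intros a la. exact (proj1 (proj2_sig (c a la))).
    + intros a la. exact (pick (proj2 (proj2_sig (c a la)))).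
Qed.

Lemma trap_or_attractor :
  inhabited (trap []) \/ exists Z, Z [] /\ forall h, Z h -> inhabited (attractor Z h).
Proof.
  destruct (classic (inhabited (trap []))) as [Ht|Ht]; [left; exact Ht|right].
  set (Z h := ~ inhabited (trap h)). exists Z. split; [exact Ht|].
  intros h Hh. apply NNPP. intros Hattr. apply Hh.
  pose (esc h' H := constructive_indefinite_description _ (escape_attractor Z h' H)).
  constructor. unshelve refine {| trap_set := fun h' => ~ inhabited (attractor Z h');
                                  trap_move h' H := proj1_sig (esc h' H) |}.
  - exact Hattr.
  - intros h' H. exact (proj1 (proj2_sig (esc h' H))).
  - intros h' H y ly nD. exact (proj2 (proj2 (proj2_sig (esc h' H)) y ly) nD).
  - intros h' H y ly Dh. exact (pick (NNPP _ (proj1 (proj2 (proj2_sig (esc h' H)) y ly) Dh))).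
Qed.

Section AttractorStrategy.
Variable Z : hist -> Prop.
Hypothesis Z_attractor : forall h, Z h -> inhabited (attractor Z h).
Hypothesis Z_nil : Z [].
(* [y0] only answers illegal moves of I. *)
Variable y0 : Y.

(* II remembers the attractor derivation she follows: choosing a fresh one at
   each move would not guarantee that a visit to [D] is ever reached. *)
Definition attr_state : Type := {h : hist & attractor Z h}.

Definition attr_answer (s : attr_state) (a : X) : attr_state * Y :=
  match excluded_middle_informative (LX a) with
  | right _ => (s, y0)
  | left la =>
    match projT2 s with
    | attr_visit _ h _ win =>
        let c := constructive_indefinite_description _ (win a la) in
        (existT _ _ (pick (Z_attractor _ (proj2 (proj2_sig c)))), proj1_sig c)
    | attr_step _ h next _ d => (existT _ _ (d a la), next a la)
    end
  end.

Definition attr_run (l : list X) : attr_state * Y :=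
  fold_left (fun sy a => attr_answer (fst sy) a) l
    (existT _ [] (pick (Z_attractor _ Z_nil)), y0).

Definition attr_strategy (l : list X) : Y := snd (attr_run l).

Lemma attr_run_prefix_S A n :
  attr_run (prefix A (S n)) = attr_answer (fst (attr_run (prefix A n))) (A n).
Proof. unfold attr_run. rewrite prefix_S, fold_left_app. reflexivity. Qed.

Lemma attr_answer_legal h (d : attractor Z h) a : LX a ->
  exists y d', attr_answer (existT _ h d) a = (existT _ (extend h a y) d', y) /\ LY h a y.
Proof.
  intros la. unfold attr_answer. destruct (excluded_middle_informative (LX a)) as [la'|];
    [|contradiction]. cbn [projT2].
  destruct d as [h Dh win|h next legal d].
  - destruct (constructive_indefinite_description _ (win a la')) as [y [ly Zy]].
    eauto.
  - eauto.
Qed.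

Variable A : nat -> X.
Hypothesis A_legal : forall n, LX (A n).

Lemma attr_run_position n :
  exists d, fst (attr_run (prefix A n)) = existT _ (play_II attr_strategy A n) d.
Proof.
  induction n as [|n [d IH]]; [eexists; reflexivity|].
  destruct (attr_answer_legal _ d (A n) (A_legal n)) as [y [d' [E _]]].
  assert (Hy : attr_strategy (prefix A (S n)) = y).
  { unfold attr_strategy. rewrite attr_run_prefix_S, IH, E. reflexivity. }
  assert (Hplay : play_II attr_strategy A (S n) = extend (play_II attr_strategy A n) (A n) y).
  { unfold play_II at 1. rewrite prefix_S, Hy. reflexivity. }
  rewrite Hplay, attr_run_prefix_S, IH, E. exists d'. reflexivity.
Qed.

Lemma attr_strategy_legal n :
  LY (play_II attr_strategy A n) (A n) (attr_strategy (prefix A (S n))).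
Proof.
  destruct (attr_run_position n) as [d E].
  destruct (attr_answer_legal _ d (A n) (A_legal n)) as [y [d' [E' Hy]]].
  unfold attr_strategy. rewrite attr_run_prefix_S, E, E'. exact Hy.
Qed.

Lemma attr_visits h (d : attractor Z h) n :
  fst (attr_run (prefix A n)) = existT _ h d ->
  exists m, n <= m /\ D (play_II attr_strategy A m).
Proof.
  revert n. induction d as [h Dh win|h next legal d IH]; intros n E.
  - destruct (attr_run_position n) as [d' E']. rewrite E in E'.
    apply (f_equal (@projT1 _ _)) in E'. cbn in E'. subst h. eauto.
  - destruct (excluded_middle_informative (LX (A n))) as [la|] eqn:Hla;
      [|contradiction (A_legal n)].
    destruct (IH (A n) la (S n)) as [m [Hm Dm]].
    + rewrite attr_run_prefix_S, E. unfold attr_answer. rewrite Hla. reflexivity.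
    + exists m. split; [lia|exact Dm].
Qed.

End AttractorStrategy.

Lemma attr_strategy_winning Z Z_attractor Z_nil y0 :
  buchi_winning_II (attr_strategy Z Z_attractor Z_nil y0).
Proof.
  intros A A_legal. split; [exact (attr_strategy_legal _ _ _ _ _ A_legal)|].
  intros N. destruct (attr_run_position Z Z_attractor Z_nil y0 A A_legal N) as [d E].
  exact (attr_visits _ _ _ _ _ A_legal _ d N E).
Qed.

Record trap_state := TrapState {
  ts_root : hist;
  ts_trap : trap ts_root;
  ts_pos : hist;
  ts_in : trap_set _ ts_trap ts_pos }.

Definition trap_choice (s : trap_state) : X := trap_move _ (ts_trap s) (ts_pos s) (ts_in s).

Definition trap_transition (s : trap_state) (y : Y) : trap_state :=
  match excluded_middle_informative (LY (ts_pos s) (trap_choice s) y) with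
  | right _ => s
  | left ly =>
    match excluded_middle_informative (D (ts_pos s)) with
    | left Dh =>
        let t := trap_next _ (ts_trap s) _ (ts_in s) y ly Dh in TrapState _ t _ (trap_root _ t)
    | right nD => TrapState _ (ts_trap s) _ (trap_stay _ (ts_trap s) _ (ts_in s) y ly nD)
    end
  end.

Lemma trap_transition_pos s y : LY (ts_pos s) (trap_choice s) y ->
  ts_pos (trap_transition s y) = extend (ts_pos s) (trap_choice s) y.
Proof.
  intros ly. unfold trap_transition.
  destruct (excluded_middle_informative (LY _ _ y)); [|contradiction].
  destruct (excluded_middle_informative (D _)); reflexivity.
Qed.

Lemma trap_transition_stay h t c H y :
  LY c (trap_choice (TrapState h t c H)) y -> ~ D c ->
  exists c' H', trap_transition (TrapState h t c H) y = TrapState h t c' H'.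
Proof.
  intros ly nD. unfold trap_transition. cbn [ts_pos].
  destruct (excluded_middle_informative (LY _ _ y)); [|contradiction].
  destruct (excluded_middle_informative (D c)); [contradiction|eauto].
Qed.

Lemma trap_transition_next h t c H y :
  LY c (trap_choice (TrapState h t c H)) y -> D c ->
  exists ly Dc c' H',
    trap_transition (TrapState h t c H) y = TrapState _ (trap_next h t c H y ly Dc) c' H'.
Proof.
  intros ly Dc. unfold trap_transition. cbn [ts_pos].
  destruct (excluded_middle_informative (LY _ _ y)); [|contradiction].
  destruct (excluded_middle_informative (D c)); [eauto|contradiction].
Qed.

Section TrapStrategy.
Variable t0 : trap [].

Definition trap_run (l : list Y) : trap_state :=
  fold_left trap_transition l (TrapState _ t0 _ (trap_root _ t0)).

Definition trap_strategy (l : list Y) : X := trap_choice (trap_run l).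

Variable p : nat -> Y.
Hypothesis p_legal : forall n, LY (play_I trap_strategy p n) (trap_strategy (prefix p n)) (p n).

Lemma trap_run_prefix_S n :
  trap_run (prefix p (S n)) = trap_transition (trap_run (prefix p n)) (p n).
Proof. unfold trap_run. rewrite prefix_S, fold_left_app. reflexivity. Qed.

Lemma trap_run_position n : ts_pos (trap_run (prefix p n)) = play_I trap_strategy p n.
Proof.
  induction n as [|n IH]; [reflexivity|].
  rewrite trap_run_prefix_S, trap_transition_pos, IH.
  - unfold play_I at 2. rewrite prefix_S. reflexivity.
  - rewrite IH. exact (p_legal n).
Qed.

Lemma trap_run_legal n :
  LY (ts_pos (trap_run (prefix p n))) (trap_choice (trap_run (prefix p n))) (p n).
Proof. rewrite trap_run_position. exact (p_legal n). Qed.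

Lemma trap_run_stays h t c H n j :
  trap_run (prefix p n) = TrapState h t c H ->
  (forall i, n <= i < n + j -> ~ D (play_I trap_strategy p i)) ->
  exists c' H', trap_run (prefix p (n + j)) = TrapState h t c' H'.
Proof.
  intros E Hno. induction j as [|j IH]; [rewrite Nat.add_0_r; eauto|].
  destruct IH as [c' [H' E']]; [intros i Hi; apply Hno; lia|].
  rewrite Nat.add_succ_r, trap_run_prefix_S, E'.
  pose proof (trap_run_legal (n + j)) as ly. rewrite E' in ly.
  apply trap_transition_stay; [exact ly|].
  pose proof (trap_run_position (n + j)) as Hc. rewrite E' in Hc. cbn in Hc.
  rewrite Hc. apply Hno. lia.
Qed.

Lemma trap_visits_finitely h (t : trap h) n c H :
  trap_run (prefix p n) = TrapState h t c H ->
  exists N, forall m, N <= m -> ~ D (play_I trap_strategy p m).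
Proof.
  revert n c H. induction t as [h Ys root move legal stay next IH]. intros n c H E.
  destruct (classic (exists m, n <= m /\ D (play_I trap_strategy p m))) as [Hex|Hno];
    [|exists n; intros m Hm Dm; apply Hno; eauto].
  destruct (classic_least _ Hex) as [m [[Hnm Dm] Hmin]].
  destruct (trap_run_stays _ _ _ _ n (m - n) E) as [c' [H' E']].
  { intros i Hi Di. specialize (Hmin i (conj (proj1 Hi) Di)). lia. }
  replace (n + (m - n)) with m in E' by lia.
  pose proof (trap_run_position m) as Hc. rewrite E' in Hc. cbn in Hc.
  pose proof (trap_run_legal m) as ly. rewrite E' in ly.
  rewrite <- Hc in Dm.
  destruct (trap_transition_next _ _ _ _ _ ly Dm) as [ly' [Dc [c'' [H'' E'']]]].
  apply (IH c' H' (p m) ly' Dc (S m) c'' H''). rewrite trap_run_prefix_S, E'. exact E''.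
Qed.

End TrapStrategy.

Lemma trap_strategy_winning t0 : buchi_winning_I (trap_strategy t0).
Proof.
  split; [intros l; apply trap_move_legal|].
  intros p p_legal. exact (trap_visits_finitely t0 p p_legal _ t0 0 _ _ eq_refl).
Qed.

Theorem buchi_determined (y0 : Y) :
  (exists tau, buchi_winning_I tau) \/ (exists sigma, buchi_winning_II sigma).
Proof.
  destruct trap_or_attractor as [[t0]|[Z [Z_nil Z_attractor]]].
  - left. exists (trap_strategy t0). apply trap_strategy_winning.
  - right. exists (attr_strategy Z Z_attractor Z_nil y0). apply attr_strategy_winning.
Qed.

End BuchiGame.

Section SupportEnumeration.
Variable g : nat -> option nat.

Lemma enum_lt e i j : enumerates_support g e -> i < j -> e i < e j.
Proof.
  intros [Hinc _] Hij. induction Hij; [apply Hinc|]. specialize (Hinc m). lia.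
Qed.

Lemma enum_ge e i : enumerates_support g e -> i <= e i.
Proof. intros [Hinc _]. induction i; [lia|]. specialize (Hinc i). lia. Qed.

Lemma enum_defined e i : enumerates_support g e -> g (e i) <> None.
Proof. intros [_ Hs]. apply Hs. eauto. Qed.

Lemma enum_exists : infinitely_defined g -> exists e, enumerates_support g e.
Proof.
  intros Hinf.
  assert (Hnext : forall k, exists n, (k <= n /\ g n <> None) /\
                    forall m, k <= m /\ g m <> None -> n <= m)
    by (intros k; apply classic_least, Hinf).
  pose (next k := proj1_sig (constructive_indefinite_description _ (Hnext k))).
  assert (Hn : forall k, (k <= next k /\ g (next k) <> None) /\
                 forall m, k <= m /\ g m <> None -> next k <= m)
    by (intros k; exact (proj2_sig (constructive_indefinite_description _ (Hnext k)))).
  pose (e i := Nat.iter i (fun k => next (S k)) (next 0)).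
  assert (Hinc : forall i, e i < e (S i)) by (intros i; apply (Hn (S (e i)))).
  assert (Hdef : forall i, g (e i) <> None) by (intros [|i]; apply Hn).
  assert (Hcover : forall i n, g n <> None -> n <= e i -> exists j, e j = n).
  { induction i as [|i IH]; intros n Gn Hni.
    - exists 0. pose proof (proj2 (Hn 0) n (conj (Nat.le_0_l n) Gn)).
      change (e 0) with (next 0) in *. lia.
    - destruct (le_lt_dec n (e i)) as [Hle|Hlt]; [exact (IH n Gn Hle)|].
      exists (S i). pose proof (proj2 (Hn (S (e i))) n (conj Hlt Gn)).
      change (e (S i)) with (next (S (e i))) in *. lia. }
  exists e. split; [exact Hinc|]. intros n. split.
  - intros Gn. apply (Hcover n n Gn).
    assert (Hge : forall i, i <= e i) by (induction i; [lia|specialize (Hinc i); lia]).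
    apply Hge.
  - intros [i <-]. apply Hdef.
Qed.

End SupportEnumeration.

Lemma enum_agree g g' e e' N :
  enumerates_support g e -> enumerates_support g' e' ->
  (forall n, n < N -> g n = g' n) -> forall t, e t < N -> e' t = e t.
Proof.
  intros He He' Hg t. induction t as [t IH] using lt_wf_ind. intros Ht.
  assert (Hin : exists j, e' j = e t).
  { apply He'. rewrite <- Hg by exact Ht. apply (enum_defined g e t He). }
  destruct Hin as [j Hj].
  destruct (lt_eq_lt_dec j t) as [[Hjt| ->]|Htj]; [|exact Hj|].
  - pose proof (enum_lt g e j t He Hjt). rewrite (IH j Hjt) in Hj by lia. lia.
  - pose proof (enum_lt g' e' t j He' Htj) as Hlt.
    assert (Hin : exists i, e i = e' t).
    { apply He. rewrite Hg by lia. apply (enum_defined g' e' t He'). }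
    destruct Hin as [i Hi].
    destruct (lt_eq_lt_dec i t) as [[Hit| ->]|Hti]; [|congruence|].
    + pose proof (IH i Hit ltac:(lia)) as Hii. rewrite Hi in Hii.
      pose proof (enum_lt g' e' i t He' Hit). lia.
    + pose proof (enum_lt g e t i He Hti). lia.
Qed.

Lemma tilde_agree g g' e e' N :
  enumerates_support g e -> enumerates_support g' e' ->
  (forall n, n < N -> g n = g' n) -> forall t, e t < N -> tilde g' e' t = tilde g e t.
Proof.
  intros He He' Hg t Ht. unfold tilde.
  rewrite (enum_agree g g' e e' N He He' Hg t Ht), Hg by exact Ht. reflexivity.
Qed.

Lemma set_of_seq_spec b k : set_of_seq b k = true <-> exists n, b n = k.
Proof.
  unfold set_of_seq. destruct (excluded_middle_informative _); split; easy.
Qed.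

Section HGameBuchi.
Variable F : (nat -> nat) -> pset.

Definition H_requirement (k : nat) (q : nat -> nat * option nat) : Prop :=
  let g := fun n => snd (q n) in
  (exists n, k <= n /\ g n <> None) /\
  forall e, enumerates_support g e ->
    (F (tilde g e) k = true -> exists n, fst (q n) = k) /\ F (tilde g e) (fst (q k)) = true.

Lemma H_requirements_win q : (forall k, H_requirement k q) -> H_II_wins_play F q.
Proof.
  intros Hq. split; [intros N; exact (proj1 (Hq N))|].
  intros e He k. apply eq_true_iff_eq. rewrite set_of_seq_spec. split.
  - exact (proj1 (proj2 (Hq k) e He)).
  - intros [n <-]. exact (proj2 (proj2 (Hq n) e He)).
Qed.

Hypothesis F_continuous : seq_continuous F.

Lemma H_win_forces_requirement q k :
  H_II_wins_play F q -> exists N, forall q', prefix q' N = prefix q N -> H_requirement k q'.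
Proof.
  intros [Hinf Hset].
  destruct (enum_exists _ Hinf) as [e He].
  set (g := fun n => snd (q n)) in *. set (x := tilde g e).
  destruct (F_continuous x (S (Nat.max k (fst (q k))))) as [m Hm].
  assert (Hwit : exists n0, F x k = true -> fst (q n0) = k).
  { destruct (F x k) eqn:Fk; [|exists 0; discriminate].
    unfold x in Fk. rewrite (Hset e He), set_of_seq_spec in Fk. destruct Fk as [n0 Hn0]. eauto. }
  destruct Hwit as [n0 Hn0].
  (* Long enough to fix the witness [n0], a defined move [e k >= k], and the
     first [m] values of [g~], which determine [F g~] below [max k (b_k)]. *)
  exists (S (e k + e m + n0)). intros q' Hq'. rewrite prefix_eq_iff in Hq'.
  set (g' := fun n => snd (q' n)).
  assert (Hg : forall n, n < S (e k + e m + n0) -> g n = g' n)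
    by (intros n Hn; unfold g, g'; rewrite Hq' by exact Hn; reflexivity).
  pose proof (enum_ge g e k He).
  unfold H_requirement. cbv zeta. change (fun n => snd (q' n)) with g'. split.
  - exists (e k). split; [assumption|]. change (g' (e k) <> None). rewrite <- Hg by lia.
    apply (enum_defined g e k He).
  - intros e' He'.
    assert (Hx : forall t, t < m -> x t = tilde g' e' t).
    { intros t Ht. symmetry. apply (tilde_agree g g' e e' _ He He' Hg).
      pose proof (enum_lt g e t m He Ht). lia. }
    pose proof (Hm _ Hx) as HF.
    split.
    + intros Fk. exists n0. rewrite Hq' by lia. apply Hn0. rewrite HF by lia. exact Fk.
    + rewrite Hq' by lia. rewrite <- HF by lia. unfold x. rewrite (Hset e He), set_of_seq_spec. eauto.
Qed.

Theorem H_II_wins_iff_progress q :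
  H_II_wins_play F q <->
  forall N, exists n, N <= n /\ progress _ H_requirement (prefix q n).
Proof.
  rewrite <- forces_iff_progress. split.
  - intros Hw j. destruct (H_win_forces_requirement q j Hw) as [n Hn].
    exists n. apply forces_prefix. exact Hn.
  - intros Hf. apply H_requirements_win. intros k. destruct (Hf k) as [n Hn].
    apply (proj1 (forces_prefix _ _ q n k) Hn). reflexivity.
Qed.

End HGameBuchi.

Definition H_legal (h : list (pset * (nat * option nat))) (A : pset) (y : nat * option nat) : Prop :=
  A (fst y) = false /\ legal_m (length h) (snd y).

Theorem H_Cat_determined I F : seq_continuous F -> H_determined I F.
Proof.
  intros F_continuous.
  destruct (buchi_determined _ _ I H_legal
              (fun h => progress _ (H_requirement F) (map snd h)) (0, None))
    as [[tau [tau_legal tau_wins]]|[sigma sigma_wins]].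
  - left. exists tau. intros p. split; [intros n; apply tau_legal|].
    intros p_legal Hwin. destruct (tau_wins p) as [N HN].
    { intros n. unfold H_legal, play_I. rewrite prefix_length. apply p_legal. }
    destruct (proj1 (H_II_wins_iff_progress F F_continuous p) Hwin N) as [n [Hn Dn]].
    apply (HN n Hn). unfold play_I. rewrite prefix_map. exact Dn.
  - right. exists sigma. intros A A_legal. destruct (sigma_wins A A_legal) as [Hlegal Hvisits].
    split.
    + intros n. pose proof (Hlegal n) as Hn. unfold H_legal, play_II in Hn.
      rewrite prefix_length in Hn. exact Hn.
    + apply H_II_wins_iff_progress; [exact F_continuous|]. intros N.
      destruct (Hvisits N) as [n [Hn Dn]]. exists n. split; [exact Hn|].
      unfold play_II in Dn. rewrite prefix_map in Dn. exact Dn.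
Qed.

Lemma G_II_of_H_II I F :
  is_ideal I -> (forall x, positive I (F x)) ->
  (exists sigma, H_winning_II I F sigma) -> exists sigma, G_winning_II I sigma.
Proof.
  intros Hideal F_positive [sigma Hsigma]. exists (fun l => fst (sigma l)).
  intros A A_legal. cbv zeta. destruct (Hsigma A A_legal) as [Hlegal [Hinf Hset]].
  split; [intros n; apply Hlegal|].
  intros Hb. destruct (enum_exists _ Hinf) as [e He].
  apply (F_positive (tilde (fun n => snd (sigma (prefix A (S n)))) e)).
  apply (ideal_down _ Hideal _ _ Hb). intros k Hk. rewrite <- (Hset e He). exact Hk.
Qed.

Fixpoint words {A} (alphabet : list A) (n : nat) : list (list A) :=
  match n with
  | 0 => [[]]
  | S n => flat_map (fun a => map (cons a) (words alphabet n)) alphabet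
  end.

Lemma in_words {A} (alphabet w : list A) :
  (forall a, In a w -> In a alphabet) -> In w (words alphabet (length w)).
Proof.
  induction w as [|a w IH]; intros Hw; [left; reflexivity|].
  apply in_flat_map. exists a. split; [apply Hw; left; reflexivity|].
  apply in_map, IH. intros b Hb. apply Hw. right. exact Hb.
Qed.

Lemma ideal_existsb I {A} (f : A -> pset) (L : list A) :
  is_ideal I -> (forall a, I (f a)) -> I (fun k => existsb (fun a => f a k) L).
Proof.
  intros Hideal Hf. induction L as [|a L IH].
  - apply (ideal_fin _ Hideal). exists 0. discriminate.
  - exact (ideal_union _ Hideal _ _ (Hf a) IH).
Qed.

Section DelayedCode.
Variable x : nat -> nat.

(* II announces [x i] at round [slot i], late enough for [x i < slot i]. *)
Fixpoint slot (i : nat) : nat :=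
  match i with
  | 0 => S (x 0)
  | S i' => slot i' + S (x (S i'))
  end.

Definition delayed_code (n : nat) : option nat :=
  match excluded_middle_informative (exists i, slot i = n) with
  | left H => Some (x (proj1_sig (constructive_indefinite_description _ H)))
  | right _ => None
  end.

Lemma slot_lt i j : i < j -> slot i < slot j.
Proof. induction 1; cbn; lia. Qed.

Lemma slot_inj i j : slot i = slot j -> i = j.
Proof.
  intros E. destruct (lt_eq_lt_dec i j) as [[Hij|]|Hji]; [|assumption|];
    [pose proof (slot_lt i j Hij)|pose proof (slot_lt j i Hji)]; lia.
Qed.

Lemma delayed_code_slot i : delayed_code (slot i) = Some (x i).
Proof.
  unfold delayed_code. destruct (excluded_middle_informative _) as [H|H]; [|exfalso; eauto].
  destruct (constructive_indefinite_description _ H) as [j Hj]. cbn.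
  rewrite (slot_inj j i Hj). reflexivity.
Qed.

Lemma delayed_code_legal n : legal_m n (delayed_code n).
Proof.
  unfold delayed_code. destruct (excluded_middle_informative _) as [H|]; [|exact I].
  destruct (constructive_indefinite_description _ H) as [i <-]. cbn.
  destruct i; cbn; lia.
Qed.

Lemma delayed_code_enum : enumerates_support delayed_code slot.
Proof.
  split; [intros i; apply slot_lt; lia|]. intros n. split.
  - unfold delayed_code. destruct (excluded_middle_informative _) as [Hn|]; [|contradiction].
    intros _. exact Hn.
  - intros [i <-]. rewrite delayed_code_slot. discriminate.
Qed.

Lemma tilde_delayed_code e : enumerates_support delayed_code e -> tilde delayed_code e = x.
Proof.
  intros He. apply functional_extensionality. intros t. unfold tilde.
  rewrite (enum_agree _ _ _ _ (S (slot t)) delayed_code_enum He (fun _ _ => eq_refl) t)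
    by lia.
  rewrite delayed_code_slot. reflexivity.
Qed.

Lemma delayed_code_infinite : infinitely_defined delayed_code.
Proof.
  intros N. exists (slot N). split; [exact (enum_ge _ _ N delayed_code_enum)|].
  rewrite delayed_code_slot. discriminate.
Qed.

End DelayedCode.

Lemma H_winning_I_ideal I F tau : H_winning_I I F tau -> forall l, I (tau l).
Proof.
  intros Htau l. rewrite <- (prefix_nth l (0, None)).
  apply (proj1 (Htau (fun n => nth n l (0, None)))).
Qed.

Definition legal_alphabet (n : nat) : list (option nat) := None :: map Some (seq 0 n).

Lemma legal_prefix_in_words g n :
  (forall i, legal_m i (g i)) -> In (prefix g n) (words (legal_alphabet n) n).
Proof.
  intros g_legal. pose proof (in_words (legal_alphabet n) (prefix g n)) as Hwords.
  rewrite prefix_length in Hwords. apply Hwords.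
  intros o Ho. unfold prefix in Ho. apply in_map_iff in Ho as [i [<- Hi%in_seq]].
  pose proof (g_legal i) as Hi_legal.
  destruct (g i) as [k|]; [right|left; reflexivity].
  apply in_map, in_seq. cbn in Hi_legal. lia.
Qed.

Lemma G_I_of_H_I I F :
  is_ideal I -> (forall A, positive I A -> exists x, forall k, F x k = A k) ->
  (exists tau, H_winning_I I F tau) -> exists tau, G_winning_I I tau.
Proof.
  intros Hideal F_onto [tau Htau].
  exists (fun bs k => existsb (fun ms => tau (combine bs ms) k)
                        (words (legal_alphabet (length bs)) (length bs))).
  intros b. split.
  - intros n. apply ideal_existsb; [exact Hideal|]. intros ms.
    exact (H_winning_I_ideal I F tau Htau _).
  - intros b_legal. apply NNPP. intros Hpos. destruct (F_onto _ Hpos) as [x Hx].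
    apply (proj2 (Htau (fun n => (b n, delayed_code x n)))).
    + intros n. split; [|apply delayed_code_legal].
      specialize (b_legal n). cbv beta in b_legal. rewrite prefix_length in b_legal.
      apply not_true_iff_false in b_legal.
      cbn [fst]. rewrite <- (combine_prefix b (delayed_code x) n).
      apply not_true_is_false. intros Hn. apply b_legal, existsb_exists.
      exists (prefix (delayed_code x) n). split; [|exact Hn].
      apply legal_prefix_in_words, delayed_code_legal.
    + split; [apply delayed_code_infinite|]. intros e He k. cbn.
      rewrite tilde_delayed_code by exact He. apply Hx.
Qed.

Theorem proposition49 (I : pset -> Prop) (F : (nat -> nat) -> pset) :
  is_ideal I -> coanalytic I ->
  seq_continuous F ->
  (forall x, positive I (F x)) ->
  (forall A, positive I A -> exists x, forall k, F x k = A k) ->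
  H_determined I F /\ G_determined I.
Proof.
  intros Hideal _ F_continuous F_positive F_onto.
  pose proof (H_Cat_determined I F F_continuous) as HH.
  split; [exact HH|].
  destruct HH as [HI|HII].
  - left. exact (G_I_of_H_I I F Hideal F_onto HI).
  - right. exact (G_II_of_H_II I F Hideal F_positive HII).
Qed.
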